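(* Let $a,b,f,d$ be positive integers with $f<\min\{a,b\}$. Let $A_1$ be the $a\times(a+b)$ array whose empty cells are exactly those in rows $[a-f+1,a]$ and columns $[1,a]$, and let $B_1$ be the $(b+f)\times(a+b)$ array whose empty cells are exactly those in rows $[b+1,b+f]$ and columns $[a+f+1,a+b]$. Let $A_2=J_{d,a+b}$ be the completely filled $d\times(a+b)$ array. Let $\phi$ be the bishop's move function on $[A_1\mid A_2]^T$, and let $\sigma$ be the move function on $[B_1\mid A_2]^T$ given by $\sigma(x)=s_C(s_R(x))$ if $x$ lies in a row of $A_2$ and $\sigma(x)=s_C(s_R^{-1}(x))$ if $x$ lies in a row of $B_1$. Then $A_1$ and $B_1$ are $(\phi,\sigma)$-equivalent with respect to $A_2$.
   Context: Arrays are partially filled and toroidal; $F(X)$ is the set of filled cells. $s_R(i,j)=(i,j+t)$, $s_C(i,j)=(i+t,j)$ with $t\ge1$ minimal such that the cell is filled (computed in the whole stacked array). $[Y\mid X]^T$ denotes the array obtained by placing $Y$ above $X$. For $\phi$ on $[A_1\mid X]^T$ and $\sigma$ on $[B_1\mid X]^T$, $\phi_2(x)=\phi^t(x)$ with $t\ge1$ minimal such that $\phi^t(x)\in X$ (for $x\in F(X)$), similarly $\sigma_2$. $A_1,B_1$ are $(\phi,\sigma)$-equivalent with respect to $X$ if for every $x\in F(X)$: $\phi(x)\notin X\iff\sigma(x)\notin X$, and when both are outside $X$, $\phi_2(x)=\sigma_2(x)$. *)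

(* Conventions: rows/columns 0-based internally;
   paper row i (1-based) = internal row i-1. *)
From mathcomp Require Import all_boot.
Set Implicit Arguments. Unset Strict Implicit. Unset Printing Implicit Defensive.

(* A partially filled array: predicate of filled cells (row, column). *)
Definition arr := nat -> nat -> bool.
Definition cell := (nat * nat)%type.

(* [Y | X]^T : Y (with mY rows) placed above X. *)
Definition stack (Y : arr) (mY : nat) (X : arr) : arr :=
  fun i j => if i < mY then Y i j else X (i - mY) j.

Definition sR (F : arr) (n : nat) (x : cell) : cell :=
  let t := (find (fun k => F x.1 ((x.2 + k.+1) %% n)) (iota 0 n)).+1 in
  (x.1, (x.2 + t) %% n).
Definition sRinv (F : arr) (n : nat) (x : cell) : cell :=
  let t := (find (fun k => F x.1 ((x.2 + n - k.+1) %% n)) (iota 0 n)).+1 in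
  (x.1, (x.2 + n - t) %% n).
Definition sC (F : arr) (m : nat) (x : cell) : cell :=
  let t := (find (fun k => F ((x.1 + k.+1) %% m) x.2) (iota 0 m)).+1 in
  ((x.1 + t) %% m, x.2).

Definition bishop (F : arr) (m n : nat) (x : cell) : cell := sC F m (sR F n x).

Definition first_return (p : cell -> cell) (inP : cell -> bool) (x y : cell) : Prop :=
  exists t, 0 < t /\ iter t p x = y /\ inP y /\
    (forall s, 0 < s -> s < t -> ~~ inP (iter s p x)).

(* (phi,sigma)-equivalence of Y1 (mA rows) and Y2 (mB rows) w.r.t. X:
   phi acts on [Y1 | X]^T, sigma on [Y2 | X]^T; the filled cell (r,c) of X
   is the cell (mA + r, c) resp. (mB + r, c) of the stacked arrays. *)
Definition phisig_equiv (phi : cell -> cell) (mA : nat)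
    (sigma : cell -> cell) (mB : nat) (X : arr) : Prop :=
  forall r c, X r c ->
    let x1 := (mA + r, c) in let x2 := (mB + r, c) in
    ((phi x1).1 < mA <-> (sigma x2).1 < mB) /\
    ((phi x1).1 < mA -> (sigma x2).1 < mB ->
      exists r' c', X r' c' /\
        first_return phi (fun y => mA <= y.1) x1 (mA + r', c') /\
        first_return sigma (fun y => mB <= y.1) x2 (mB + r', c')).

Definition A1 (a b f : nat) : arr :=
  fun i j => [&& i < a, j < a + b & ~~ ((a - f <= i) && (j < a))].
Definition B1 (a b f : nat) : arr :=
  fun i j => [&& i < b + f, j < a + b & ~~ ((b <= i) && (a + f <= j))].
Definition J (d n : nat) : arr := fun i j => (i < d) && (j < n).

Definition phiA (a b f d : nat) : cell -> cell :=
  bishop (stack (A1 a b f) a (J d (a + b))) (a + d) (a + b).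

Definition sigmaB (a b f d : nat) (x : cell) : cell :=
  let F := stack (B1 a b f) (b + f) (J d (a + b)) in
  if b + f <= x.1 then sC F (b + f + d) (sR F (a + b) x)
  else sC F (b + f + d) (sRinv F (a + b) x).

(* Both phi and sigma move a cell of X one row down, so they stay in X except
   from its last row, where both wrap to row 0 of the upper array.  From there
   phi runs diagonally down-right through the a - f full rows of A_1 and sigma
   runs diagonally down-left through the b full rows of B_1.  Each then either
   drops straight into X over the hole of its array, or crosses the f short
   rows, moving cyclically within their filled columns ([a, a + b) for A_1,
   [0, a + f) for B_1).  Column bookkeeping modulo a + b shows that both first
   re-enter X in its top row at the same column [return_col a b f c]. *)

From mathcomp Require Import all_boot zify.

Set Implicit Arguments.
Unset Strict Implicit.
Unset Printing Implicit Defensive.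

Lemma modn_sub_small m d : d <= m < d + d -> m %% d = m - d.
Proof. by case/andP=> dm md; rewrite -{1}(subnK dm) modnDr modn_small // ltn_subLR. Qed.

Lemma find_iota0 (P : pred nat) n k :
  k < n -> P k -> (forall l, l < k -> ~~ P l) -> find P (iota 0 n) = k.
Proof.
move=> kn Pk before_k.
have hasP_iota : has P (iota 0 n) by apply/hasP; exists k; rewrite // mem_iota.
have find_lt : find P (iota 0 n) < n by rewrite -[n in _ < n](size_iota 0) -has_find.
case: (ltngtP (find P (iota 0 n)) k) => // [lt_k | gt_k].
- by have := nth_find 0 hasP_iota; rewrite nth_iota // add0n (negbTE (before_k _ lt_k)).
- by have := before_find 0 gt_k; rewrite nth_iota // add0n Pk.
Qed.

Section Moves.
Variables (F : arr) (m n i j : nat).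

Lemma sR_first k : k < n -> F i ((j + k.+1) %% n) ->
  (forall l, l < k -> ~~ F i ((j + l.+1) %% n)) -> sR F n (i, j) = (i, (j + k.+1) %% n).
Proof. by move=> kn Fk before_k; rewrite /sR /= (find_iota0 kn). Qed.

Lemma sRinv_first k : k < n -> F i ((j + n - k.+1) %% n) ->
  (forall l, l < k -> ~~ F i ((j + n - l.+1) %% n)) ->
  sRinv F n (i, j) = (i, (j + n - k.+1) %% n).
Proof. by move=> kn Fk before_k; rewrite /sRinv /= (find_iota0 kn). Qed.

Lemma sC_first k : k < m -> F ((i + k.+1) %% m) j ->
  (forall l, l < k -> ~~ F ((i + l.+1) %% m) j) -> sC F m (i, j) = ((i + k.+1) %% m, j).
Proof. by move=> km Fk before_k; rewrite /sC /= (find_iota0 km). Qed.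

Lemma sR_next : 0 < n -> F i ((j + 1) %% n) -> sR F n (i, j) = (i, (j + 1) %% n).
Proof. by move=> n0 Fj; apply: (sR_first (k := 0)). Qed.

Lemma sRinv_prev : 0 < n -> F i ((j + n - 1) %% n) -> sRinv F n (i, j) = (i, (j + n - 1) %% n).
Proof. by move=> n0 Fj; apply: (sRinv_first (k := 0)). Qed.

Lemma sC_next : 0 < m -> F ((i + 1) %% m) j -> sC F m (i, j) = ((i + 1) %% m, j).
Proof. by move=> m0 Fi; apply: (sC_first (k := 0)). Qed.

End Moves.

Section FirstReturn.
Variables (p : cell -> cell) (P : cell -> bool).

Lemma first_return_step x : P (p x) -> first_return p P x (p x).
Proof. by move=> Ppx; exists 1; do 3!split=> //; case. Qed.

Lemma first_return_after k x y : (forall s, 0 < s <= k -> ~~ P (iter s p x)) ->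
  first_return p P (iter k p x) y -> first_return p P x y.
Proof.
move=> avoid [t [t0 [<- [Py before_t]]]]; exists (t + k); rewrite iterD.
do !split=> //; first by rewrite addn_gt0 t0.
move=> s s0 st; have [sk | ks] := leqP s k; first by rewrite avoid ?s0.
rewrite -(subnK (ltnW ks)) iterD before_t //; lia.
Qed.

Lemma first_return_next x y :
  ~~ P (p x) -> first_return p P (p x) y -> first_return p P x y.
Proof.
move=> Npx; apply: (first_return_after (k := 1)) => s.
by rewrite -eqn_leq => /eqP <-.
Qed.

End FirstReturn.

(* [K] is the column [c + 1 - b] (mod [a + b]) in which sigma, started in the
   last row of X at column [c], leaves the full rows of B_1. *)
Definition return_col (a b f c : nat) : nat :=
  let K := (c + a + 1) %% (a + b) in
  if a + f <= K then K else if f <= K then K - f else K + a.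

Section Arrays.
Variables a b f d : nat.
Hypotheses (a_gt0 : 0 < a) (f_gt0 : 0 < f) (d_gt0 : 0 < d) (f_lt_a : f < a) (f_lt_b : f < b).

Local Notation n := (a + b).
Local Notation phi := (phiA a b f d).
Local Notation sigma := (sigmaB a b f d).
Local Notation FA := (stack (A1 a b f) a (J d n)).
Local Notation FB := (stack (B1 a b f) (b + f) (J d n)).

Lemma A1J_full_row i k : i < a - f \/ a <= i < a + d -> k < n -> FA i k.
Proof. rewrite /stack /A1 /J; case: ifP; lia. Qed.

Lemma A1J_short_row i k : a - f <= i < a -> FA i k = (a <= k < n).
Proof. rewrite /stack /A1 /J; case: ifP; lia. Qed.

Lemma A1J_right_cols i k : i < a + d -> a <= k < n -> FA i k.
Proof. rewrite /stack /A1 /J; case: ifP; lia. Qed.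

Lemma B1J_full_row i k : i < b \/ b + f <= i < b + f + d -> k < n -> FB i k.
Proof. rewrite /stack /B1 /J; case: ifP; lia. Qed.

Lemma B1J_short_row i k : b <= i < b + f -> FB i k = (k < a + f).
Proof. rewrite /stack /B1 /J; case: ifP; lia. Qed.

Lemma B1J_left_cols i k : i < b + f + d -> k < a + f -> FB i k.
Proof. rewrite /stack /B1 /J; case: ifP; lia. Qed.

Let n_gt0 : 0 < n. Proof. by rewrite addn_gt0 a_gt0. Qed.
Let ad_gt0 : 0 < a + d. Proof. by rewrite addn_gt0 a_gt0. Qed.
Let bfd_gt0 : 0 < b + f + d. Proof. by rewrite addn_gt0 d_gt0 orbT. Qed.

Lemma phi_full_row i j : i.+1 < a - f \/ a <= i /\ i.+1 < a + d ->
  phi (i, j) = (i.+1, (j + 1) %% n).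
Proof.
move=> hi; have jn : (j + 1) %% n < n by rewrite ltn_pmod.
have F_right : FA i ((j + 1) %% n) by apply: A1J_full_row => //; lia.
have F_below : FA ((i + 1) %% (a + d)) ((j + 1) %% n).
  by rewrite addn1 modn_small; [apply: A1J_full_row => //; lia | lia].
rewrite /phiA /bishop (sR_next n_gt0 F_right) (sC_next ad_gt0 F_below).
by rewrite addn1 modn_small //; lia.
Qed.

Lemma phi_last_row j : phi (a + d.-1, j) = (0, (j + 1) %% n).
Proof.
have jn : (j + 1) %% n < n by rewrite ltn_pmod.
have wrap : (a + d.-1 + 1) %% (a + d) = 0 by rewrite addn1 -addnS prednK // modnn.
have F_right : FA (a + d.-1) ((j + 1) %% n) by apply: A1J_full_row => //; lia.
have F_below : FA ((a + d.-1 + 1) %% (a + d)) ((j + 1) %% n).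
  by rewrite wrap; apply: A1J_full_row => //; lia.
by rewrite /phiA /bishop (sR_next n_gt0 F_right) (sC_next ad_gt0 F_below) wrap.
Qed.

Lemma phi_turn j : phi ((a - f).-1, j) =
  let k := (j + 1) %% n in if k < a then (a, k) else (a - f, k).
Proof.
set k := (j + 1) %% n; have kn : k < n by rewrite ltn_pmod.
have F_right : FA (a - f).-1 k by apply: A1J_full_row => //; lia.
have row_below l : l <= f -> ((a - f).-1 + l.+1) %% (a + d) = a - f + l.
  by move=> lf; rewrite modn_small; lia.
rewrite /phiA /bishop (sR_next n_gt0 F_right) /=; case: ltnP => ka.
- have F_a : FA (((a - f).-1 + f.+1) %% (a + d)) k.
    by rewrite row_below // (subnK (ltnW f_lt_a)); apply: A1J_full_row => //; lia.
  have hole l : l < f -> ~~ FA (((a - f).-1 + l.+1) %% (a + d)) k.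
    by move=> lf; rewrite row_below ?A1J_short_row; lia.
  have f_lt_ad : f < a + d by lia.
  by rewrite (sC_first f_lt_ad F_a hole) row_below // (subnK (ltnW f_lt_a)).
- have F_below : FA (((a - f).-1 + 1) %% (a + d)) k.
    by rewrite row_below // A1J_short_row; lia.
  by rewrite (sC_next ad_gt0 F_below) row_below ?addn0.
Qed.

Lemma phi_short_row i y : a - f <= i < a -> y < b ->
  phi (i, a + y) = (i.+1, a + (y + 1) %% b).
Proof.
move=> hi yb; have F_below k : a <= k < n -> FA ((i + 1) %% (a + d)) k.
  by move=> hk; rewrite modn_small; [apply: A1J_right_cols => //; lia | lia].
rewrite /phiA /bishop; have [y1b | y1b] := ltnP (y + 1) b.
- have F_right : FA i ((a + y + 1) %% n) by rewrite (A1J_short_row _ hi) modn_small; lia.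
  rewrite (sR_next n_gt0 F_right) modn_small; last lia.
  rewrite (sC_next ad_gt0 (F_below _ _)); last lia.
  by congr pair; rewrite modn_small ?addnA //; lia.
- have wrap l : l < n -> (a + y + l.+1) %% n = l.
    by move=> ln; rewrite (_ : a + y + l.+1 = l + n) ?modnDr ?modn_small //; lia.
  have F_right : FA i ((a + y + a.+1) %% n) by rewrite (A1J_short_row _ hi) wrap; lia.
  have hole l : l < a -> ~~ FA i ((a + y + l.+1) %% n).
    by move=> la; rewrite (A1J_short_row _ hi) wrap; lia.
  have a_lt_n : a < n by lia.
  rewrite (sR_first a_lt_n F_right hole) wrap //.
  rewrite (sC_next ad_gt0 (F_below _ _)); last lia.
  by rewrite (_ : y + 1 = b) ?modnn ?addn0 ?addn1 ?modn_small //; lia.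
Qed.

Lemma sigma_X_row i j : b + f <= i -> i.+1 < b + f + d ->
  sigma (i, j) = (i.+1, (j + 1) %% n).
Proof.
move=> hi hi1; have jn : (j + 1) %% n < n by rewrite ltn_pmod.
have F_right : FB i ((j + 1) %% n) by apply: B1J_full_row => //; lia.
have F_below : FB ((i + 1) %% (b + f + d)) ((j + 1) %% n).
  by rewrite addn1 modn_small //; apply: B1J_full_row => //; lia.
rewrite /sigmaB /= hi (sR_next n_gt0 F_right) (sC_next bfd_gt0 F_below).
by rewrite addn1 modn_small.
Qed.

Lemma sigma_last_row j : sigma (b + f + d.-1, j) = (0, (j + 1) %% n).
Proof.
have jn : (j + 1) %% n < n by rewrite ltn_pmod.
have wrap : (b + f + d.-1 + 1) %% (b + f + d) = 0.
  by rewrite addn1 -addnS prednK // modnn.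
have F_right : FB (b + f + d.-1) ((j + 1) %% n) by apply: B1J_full_row => //; lia.
have F_below : FB ((b + f + d.-1 + 1) %% (b + f + d)) ((j + 1) %% n).
  by rewrite wrap; apply: B1J_full_row => //; lia.
rewrite /sigmaB /= leq_addr (sR_next n_gt0 F_right) (sC_next bfd_gt0 F_below).
by rewrite wrap.
Qed.

Lemma sigma_full_row i j : i.+1 < b -> sigma (i, j) = (i.+1, (j + n - 1) %% n).
Proof.
move=> hi; have jn : (j + n - 1) %% n < n by rewrite ltn_pmod.
have F_left : FB i ((j + n - 1) %% n) by apply: B1J_full_row => //; lia.
have F_below : FB ((i + 1) %% (b + f + d)) ((j + n - 1) %% n).
  by rewrite addn1 modn_small; [apply: B1J_full_row => //; lia | lia].
rewrite /sigmaB /= ifN; last lia.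
by rewrite (sRinv_prev n_gt0 F_left) (sC_next bfd_gt0 F_below) addn1 modn_small //; lia.
Qed.

Lemma sigma_turn j : sigma (b.-1, j) =
  let K := (j + n - 1) %% n in if a + f <= K then (b + f, K) else (b, K).
Proof.
set K := (j + n - 1) %% n; have Kn : K < n by rewrite ltn_pmod.
have F_left : FB b.-1 K by apply: B1J_full_row => //; lia.
have row_below l : l <= f -> (b.-1 + l.+1) %% (b + f + d) = b + l.
  by move=> lf; rewrite modn_small; lia.
rewrite /sigmaB /= ifN; last lia.
rewrite (sRinv_prev n_gt0 F_left) /=; case: leqP => Kaf.
- have F_X : FB ((b.-1 + f.+1) %% (b + f + d)) K.
    by rewrite row_below //; apply: B1J_full_row => //; lia.
  have hole l : l < f -> ~~ FB ((b.-1 + l.+1) %% (b + f + d)) K.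
    by move=> lf; rewrite row_below ?B1J_short_row; lia.
  have f_lt_bfd : f < b + f + d by lia.
  by rewrite (sC_first f_lt_bfd F_X hole) row_below.
- have F_below : FB ((b.-1 + 1) %% (b + f + d)) K.
    by rewrite row_below // B1J_short_row; lia.
  by rewrite (sC_next bfd_gt0 F_below) row_below ?addn0.
Qed.

Lemma sigma_short_row i y : b <= i < b + f -> y < a + f ->
  sigma (i, y) = (i.+1, (y + (a + f) - 1) %% (a + f)).
Proof.
move=> hi yaf; have F_below k : k < a + f -> FB ((i + 1) %% (b + f + d)) k.
  by move=> hk; rewrite modn_small; [apply: B1J_left_cols => //; lia | lia].
rewrite /sigmaB /= ifN; last lia.
have [-> | y_gt0] := posnP y.
- have wrap l : l < n -> (0 + n - l.+1) %% n = n - l.+1.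
    by move=> ln; rewrite modn_small; lia.
  have F_left : FB i ((0 + n - (b - f).+1) %% n) by rewrite (B1J_short_row _ hi) wrap; lia.
  have hole l : l < b - f -> ~~ FB i ((0 + n - l.+1) %% n).
    by move=> lbf; rewrite (B1J_short_row _ hi) wrap; lia.
  have bf_lt_n : b - f < n by lia.
  rewrite (sRinv_first bf_lt_n F_left hole) wrap //.
  rewrite (sC_next bfd_gt0 (F_below _ _)); last lia.
  by congr pair; rewrite modn_small; lia.
- have F_left : FB i ((y + n - 1) %% n) by rewrite (B1J_short_row _ hi) modn_sub_small; lia.
  rewrite (sRinv_prev n_gt0 F_left) modn_sub_small; last lia.
  rewrite (sC_next bfd_gt0 (F_below _ _)); last lia.
  by congr pair; [rewrite modn_small | rewrite modn_sub_small]; lia.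
Qed.

Lemma phi_iter_full s j : s < a - f -> j < n -> iter s phi (0, j) = (s, (j + s) %% n).
Proof.
move=> + jn; elim: s => [|s IH] s_lt /=; first by rewrite addn0 modn_small.
by rewrite (IH (ltnW s_lt)) (phi_full_row _ (or_introl s_lt)) modnDml -addnA addn1.
Qed.

Lemma phi_iter_short s y : s <= f -> y < b ->
  iter s phi (a - f, a + y) = (a - f + s, a + (y + s) %% b).
Proof.
move=> + yb; elim: s => [|s IH] s_le /=; first by rewrite !addn0 modn_small.
have row_s : a - f <= a - f + s < a by lia.
have col_s : (y + s) %% b < b by rewrite ltn_pmod //; lia.
by rewrite (IH (ltnW s_le)) (phi_short_row row_s col_s) modnDml addn1 !addnS.
Qed.

Lemma sigma_iter_full s j : s < b -> j < n -> iter s sigma (0, j) = (s, (j + (n - s)) %% n).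
Proof.
move=> + jn; elim: s => [|s IH] s_lt /=; first by rewrite subn0 modnDr modn_small.
rewrite (IH (ltnW s_lt)) sigma_full_row // -(addnBA _ n_gt0) modnDml -addnA.
rewrite (_ : n - s + (n - 1) = n - s.+1 + n); last lia.
by rewrite addnA modnDr.
Qed.

Lemma sigma_iter_short s y : s <= f -> y < a + f ->
  iter s sigma (b, y) = (b + s, (y + (a + f - s)) %% (a + f)).
Proof.
move=> + yaf; elim: s => [|s IH] s_le /=; first by rewrite addn0 subn0 modnDr modn_small.
have row_s : b <= b + s < b + f by lia.
have col_s : (y + (a + f - s)) %% (a + f) < a + f by rewrite ltn_pmod //; lia.
rewrite (IH (ltnW s_le)) (sigma_short_row row_s col_s) -addnBA; last lia.
rewrite modnDml -addnA (_ : a + f - s + (a + f - 1) = a + f - s.+1 + (a + f)); last lia.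
by rewrite addnA modnDr addnS.
Qed.

Local Notation in_phiX := (fun z : cell => a <= z.1).
Local Notation in_sigmaX := (fun z : cell => b + f <= z.1).

Lemma phi_return_from_short y : y < b ->
  first_return phi in_phiX (a - f, a + y) (a, a + (y + f) %% b).
Proof.
move=> yb; exists f; rewrite phi_iter_short // (subnK (ltnW f_lt_a)); do 3!split=> //.
by move=> s s0 sf; rewrite phi_iter_short /=; lia.
Qed.

Lemma sigma_return_from_short y : y < a + f ->
  first_return sigma in_sigmaX (b, y) (b + f, (y + a) %% (a + f)).
Proof.
move=> yaf; exists f; rewrite sigma_iter_short // addnK; do 3!split=> //.
by move=> s s0 sf; rewrite sigma_iter_short /=; lia.
Qed.

Lemma phi_return_from_turn j : first_return phi in_phiX ((a - f).-1, j)
  (a, let k := (j + 1) %% n in if k < a then k else a + (k - a + f) %% b).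
Proof.
have := phi_turn j; rewrite /=; set k := (j + 1) %% n => turn.
have kn : k < n by rewrite ltn_pmod.
case: ltnP turn => ka turn.
  by rewrite -turn; apply: first_return_step; rewrite turn.
apply: first_return_next; rewrite turn /=; first lia.
by rewrite -{1}(subnKC ka); apply: phi_return_from_short; lia.
Qed.

Lemma sigma_return_from_turn j : first_return sigma in_sigmaX (b.-1, j)
  (b + f, let K := (j + n - 1) %% n in if a + f <= K then K else (K + a) %% (a + f)).
Proof.
have := sigma_turn j; rewrite /=; set K := (j + n - 1) %% n => turn.
have Kn : K < n by rewrite ltn_pmod.
case: leqP turn => Kaf turn.
  by rewrite -turn; apply: first_return_step; rewrite turn.
apply: first_return_next; rewrite turn /=; first lia.
exact: sigma_return_from_short.
Qed.

Lemma return_col_lt c : return_col a b f c < n.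
Proof.
rewrite /return_col; move: (ltn_pmod (c + a + 1) n_gt0); move: (_ %% n) => K K_lt.
by have [// | K_lt_af] := leqP (a + f) K; have [fK | Kf] := leqP f K; lia.
Qed.

Lemma phi_exit_col c : let k := (c + a - f + 1) %% n in
  (if k < a then k else a + (k - a + f) %% b) = return_col a b f c.
Proof.
rewrite /return_col /=; set k := (c + a - f + 1) %% n.
have kn : k < n by rewrite ltn_pmod.
have -> : (c + a + 1) %% n = (k + f) %% n by rewrite modnDml; congr modn; lia.
have [kf_lt | kf_ge] := ltnP (k + f) n.
- rewrite (modn_small kf_lt) leq_add2r leq_addl addnK.
  by case: ltnP => ka //; rewrite modn_small; lia.
- rewrite [(k + f) %% n]modn_sub_small; last lia.
  rewrite ifN; last lia; rewrite ifN; last lia; rewrite ifN; last lia.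
  by rewrite modn_sub_small; lia.
Qed.

Lemma sigma_exit_col c : let K := (c + a + 1) %% n in
  (if a + f <= K then K else (K + a) %% (a + f)) = return_col a b f c.
Proof.
rewrite /return_col /=; set K := (c + a + 1) %% n.
case: leqP => // K_lt; case: leqP => fK; first by rewrite modn_sub_small; lia.
by rewrite modn_small; lia.
Qed.

Lemma phi_return c : first_return phi in_phiX (a + d.-1, c) (a, return_col a b f c).
Proof.
have orbit s : s < a - f -> iter s.+1 phi (a + d.-1, c) = (s, (c + 1 + s) %% n).
  by move=> s_lt; rewrite iterSr phi_last_row phi_iter_full ?modnDml // ltn_pmod.
apply: (first_return_after (k := a - f)).
  by move=> s /andP[s0 s_le]; rewrite -(prednK s0) orbit /=; lia.
have pred_lt : (a - f).-1 < a - f by lia.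
have := orbit _ pred_lt; rewrite prednK ?subn_gt0 // => ->.
have := phi_return_from_turn ((c + 1 + (a - f).-1) %% n).
by rewrite /= modnDml (_ : c + 1 + (a - f).-1 + 1 = c + a - f + 1) ?phi_exit_col //; lia.
Qed.

Lemma sigma_return c :
  first_return sigma in_sigmaX (b + f + d.-1, c) (b + f, return_col a b f c).
Proof.
have orbit s : s < b -> iter s.+1 sigma (b + f + d.-1, c) = (s, (c + 1 + (n - s)) %% n).
  by move=> s_lt; rewrite iterSr sigma_last_row sigma_iter_full ?modnDml // ltn_pmod.
apply: (first_return_after (k := b)).
  by move=> s /andP[s0 s_le]; rewrite -(prednK s0) orbit /=; lia.
have pred_lt : b.-1 < b by lia.
have := orbit _ pred_lt; rewrite prednK => [->|]; last lia.
have := sigma_return_from_turn ((c + 1 + (n - b.-1)) %% n).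
rewrite /= -(addnBA _ n_gt0) modnDml.
by rewrite (_ : c + 1 + (n - b.-1) + (n - 1) = c + a + 1 + n) ?modnDr ?sigma_exit_col //; lia.
Qed.

End Arrays.

Theorem lemma4p4 (a b f d : nat) :
  0 < a -> 0 < b -> 0 < f -> 0 < d -> f < minn a b ->
  phisig_equiv (phiA a b f d) a (sigmaB a b f d) (b + f) (J d (a + b)).
Proof.
move=> a_gt0 _ f_gt0 d_gt0; rewrite leq_min => /andP[f_lt_a f_lt_b] r c /andP[r_lt_d _]; cbv zeta.
have [r_inner | r_last] := ltnP r.+1 d.
  have [] : (phiA a b f d (a + r, c)).1 = a + r.+1 /\
      (sigmaB a b f d (b + f + r, c)).1 = b + f + r.+1.
    by rewrite phi_full_row ?sigma_X_row /=; lia.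
  by move=> -> ->; rewrite !ltnNge !leq_addr.
have -> : r = d.-1 by lia.
rewrite phi_last_row ?sigma_last_row //; split=> [|_ _]; first by split=> _ /=; lia.
exists 0, (return_col a b f c); rewrite !addn0 /J d_gt0 (return_col_lt (d := d)) //.
by split=> //; split; [apply: phi_return | apply: sigma_return].
Qed.
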